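(* $\mathscr X$ is a compact subset of $C[0,1]$ with respect to the topology of uniform convergence.
   Context: The Faber--Schauder functions are $e_{0,0}(t):=(\min\{t,1-t\})^+$ and $e_{m,k}(t):=2^{-m/2}e_{0,0}(2^m t-k)$ for $t\in\mathbb R$, $m\ge1$, $k\in\mathbb Z$. $\mathscr X$ denotes the set of all functions $x\in C[0,1]$ of the form $x=\sum_{m=0}^\infty\sum_{k=0}^{2^m-1}\theta_{m,k}e_{m,k}$ (uniformly convergent series) with $\theta_{m,k}\in\{-1,+1\}$. *)

From HB Require Import structures.
From mathcomp Require Import all_boot all_order all_algebra.
From mathcomp Require Import all_classical all_reals all_analysis.
Set Implicit Arguments. Unset Strict Implicit. Unset Printing Implicit Defensive.
Import Order.TTheory GRing.Theory Num.Theory.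
Import numFieldNormedType.Exports.
Local Open Scope classical_set_scope.
Local Open Scope ring_scope.

Definition e00 {R : realType} (t : R) : R := Num.max (Num.min t (1 - t)) 0.

Definition fs {R : realType} (m k : nat) (t : R) : R :=
  (2 : R) `^ (- (m%:R / 2)) * e00 ((2 : R) ^+ m * t - k%:R).

Definition fs_partial {R : realType} (theta : nat -> nat -> R) (N : nat) (t : R) : R :=
  \sum_(m < N) \sum_(k < 2 ^ m) theta m k * fs m k t.

(* The set \mathscr X: functions x of the form sum_m sum_{k<2^m} theta_{m,k} e_{m,k}
   with theta in {-1,+1}, the series converging uniformly (here: on all of R,
   which determines x everywhere; all e_{m,k} with 0<=k<2^m vanish off [0,1]),
   and x continuous on [0,1]. *)
Definition FS_set {R : realType} : set (R -> R) :=
  [set x | exists theta : nat -> nat -> R,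
     (forall m k, theta m k = 1 \/ theta m k = -1) /\
     {uniform, fs_partial theta @ \oo --> x} /\
     {within `[0, 1], continuous x}].

(* Index sign arrays by the Cantor space {0,1}^N. On level m the functions
   e_{m,k}, 0 <= k < 2^m, have disjoint supports and are bounded by 2^{-m/2},
   so for any coefficients in [-1,1] the level sums are bounded by q^m with
   q = 2^{-1/2} < 1 and the series converges uniformly, the remainder after N
   levels being at most q^N/(1-q). Two sign arrays agreeing on the first N
   levels therefore have sums at uniform distance at most 2q^N/(1-q): the sum
   map is continuous on the compact Cantor space, and X is its image. *)

From HB Require Import structures.
From mathcomp Require Import all_boot all_order all_algebra.
From mathcomp Require Import all_classical all_reals all_analysis.
From mathcomp Require Import ring lra.
Import Order.TTheory GRing.Theory Num.Theory.
Import numFieldNormedType.Exports.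
Local Open Scope classical_set_scope.
Local Open Scope ring_scope.

Section FaberSchauder.
Variable R : realType.
Implicit Types (th : nat -> nat -> R) (t u : R).

Lemma e00_ge0 t : 0 <= e00 t.
Proof. by rewrite /e00 le_max lexx orbT. Qed.

Lemma e00_le1 t : e00 t <= 1.
Proof.
rewrite /e00 ge_max ler01 andbT ge_min.
by apply/orP; case: (leP t 1) => ?; [left|right]; lra.
Qed.

Lemma e00_eq0 t : t <= 0 \/ 1 <= t -> e00 t = 0.
Proof.
move=> ht; apply: max_r; rewrite ge_min.
by apply/orP; case: ht => ?; [left|right]; lra.
Qed.

Lemma e00_neq0 t : e00 t != 0 -> 0 < t < 1.
Proof.
apply: contraNT; rewrite negb_and -!leNgt => /orP ht.
by apply/eqP/e00_eq0; case: ht; [left|right].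
Qed.

Lemma e00_shift_support u (j k : nat) :
  e00 (u - j%:R) != 0 -> e00 (u - k%:R) != 0 -> j = k.
Proof.
move=> /e00_neq0/andP[? ?] /e00_neq0/andP[? ?].
by apply/anti_leq/andP; split; rewrite -ltnS -(ltr_nat R) -natr1; lra.
Qed.

Lemma e00_continuous : continuous (@e00 R).
Proof.
move=> t; apply: (@continuous_max _ _ (fun t => Num.min t (1 - t)) (cst 0));
  last exact: cst_continuous.
apply: (@continuous_min _ _ id (fun t => 1 - t)); first exact: cvg_id.
by apply: cvgB; [exact: cvg_cst | exact: cvg_id].
Qed.

Definition fs_ratio : R := 2 `^ (- 2^-1).

Lemma fs_ratio_gt0 : 0 < fs_ratio.
Proof. exact: powR_gt0. Qed.

Lemma powR_fs_ratio m : (2 : R) `^ (- (m%:R / 2)) = fs_ratio ^+ m.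
Proof.
rewrite /fs_ratio -powR_mulrn ?powR_ge0 // -powRrM.
by congr (_ `^ _); rewrite mulNr mulrC.
Qed.

Lemma fs_ratio_lt1 : fs_ratio < 1.
Proof.
rewrite -(expr_lt1 (n := 2)) ?(ltW fs_ratio_gt0) // -powR_fs_ratio divff ?pnatr_eq0 //.
by rewrite powR_inv1 // invf_lt1 // ltr1n.
Qed.

Lemma fs_scale m k t : fs m k t = fs_ratio ^+ m * e00 (2 ^+ m * t - k%:R).
Proof. by rewrite /fs powR_fs_ratio. Qed.

Lemma fs_continuous m k : continuous (@fs R m k).
Proof.
move=> t; apply: (@continuousM _ _ (cst _) (fun t => e00 (2 ^+ m * t - k%:R))).
  exact: cst_continuous.
apply: (continuous_comp _ (e00_continuous _)).
by apply: cvgB; [apply: cvgM; [exact: cvg_cst | exact: cvg_id] | exact: cvg_cst].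
Qed.

Lemma fs_partial_continuous th N : continuous (fs_partial th N).
Proof.
apply: continuous_big => [|m _]; first exact: add_continuous.
apply: continuous_big => [|k _]; first exact: add_continuous.
move=> t; apply: (@continuousM _ _ (cst (th m k)) (fs m k)).
  exact: cst_continuous.
exact: fs_continuous.
Qed.

Definition fs_level th m t := \sum_(k < 2 ^ m) th m k * fs m k t.

Lemma fs_level_bound th m t :
  (forall k, `|th m k| <= 1) -> `|fs_level th m t| <= fs_ratio ^+ m.
Proof.
move=> th_le1; set u := 2 ^+ m * t.
have q_ge0 : 0 <= fs_ratio ^+ m by rewrite exprn_ge0 // ltW // fs_ratio_gt0.
have term0 (j : 'I_(2 ^ m)) : e00 (u - j%:R) = 0 -> th m j * fs m j t = 0.
  by rewrite fs_scale => ->; rewrite !mulr0.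
(* The supports ]k 2^-m, (k+1) 2^-m[ are disjoint: at most one term is nonzero. *)
have [[k k_supp]|no_supp] := pselect (exists k : 'I_(2 ^ m), e00 (u - k%:R) != 0).
- rewrite /fs_level (bigD1 k) //= big1 ?addr0 => [|j j_neq_k]; last first.
    apply: term0; apply: contraNeq j_neq_k => j_supp.
    by apply/eqP/val_inj; exact: e00_shift_support j_supp k_supp.
  rewrite normrM -[leRHS]mul1r ler_pM // fs_scale normrM ger0_norm //.
  by rewrite ger0_norm ?e00_ge0 // ler_piMr // e00_le1.
- rewrite /fs_level big1 ?normr0 // => j _; apply: term0.
  by apply: contra_notP no_supp => /eqP j_supp; exists j.
Qed.

Lemma sumr_geometric_tail (K : comPzRingType) (q : K) a b : (a <= b)%N ->
  \sum_(a <= m < b) q ^+ m * (1 - q) = q ^+ a - q ^+ b.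
Proof.
move=> ab; rewrite -[RHS]opprB -(telescope_sumr (GRing.exp q) ab) -sumrN.
by apply: eq_bigr => m _; rewrite exprS opprB mulrBr mulr1 mulrC.
Qed.

Definition fs_tail N : R := fs_ratio ^+ N / (1 - fs_ratio).

Lemma fs_tail_ge0 N : 0 <= fs_tail N.
Proof. by rewrite divr_ge0 ?exprn_ge0 ?subr_ge0 ?ltW ?fs_ratio_gt0 ?fs_ratio_lt1. Qed.

Lemma fs_tail_lt {e : R} : 0 < e -> \forall N \near \oo, fs_tail N < e.
Proof.
move=> e_gt0; have q_lt1 : `|fs_ratio| < 1.
  by rewrite ger0_norm ?fs_ratio_lt1 // ltW // fs_ratio_gt0.
have /cvgrPdist_lt/(_ e e_gt0) := cvg_geometric (1 - fs_ratio)^-1 q_lt1.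
apply: filterS => N /=; rewrite sub0r normrN mulrC; exact: le_lt_trans (ler_norm _).
Qed.



Lemma fs_partial_subn th a b t : (a <= b)%N ->
  fs_partial th b t - fs_partial th a t = \sum_(a <= m < b) fs_level th m t.
Proof.
move=> ab; rewrite /fs_partial -!(big_mkord xpredT (fun m => fs_level th m t)).
by rewrite (@big_cat_nat _ _ _ a 0 b) //= addrAC subrr add0r.
Qed.

Definition fs_sum th t := limn (fun N => fs_partial th N t).

Lemma fs_sum_unique th (x : R -> R) :
  {uniform, fs_partial th @ \oo --> x} -> x = fs_sum th.
Proof.
move=> th_x; apply/funext => t; apply/esym/cvg_lim => //.
have : {uniform [set t], fs_partial th @ \oo --> x} by exact: uniform_subset_cvg th_x.
by rewrite uniform_set1.
Qed.

Section BoundedCoefficients.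
Variable th : nat -> nat -> R.
Hypothesis th_le1 : forall m k, `|th m k| <= 1.

Lemma fs_level_tail_bound a b t :
  `|\sum_(a <= m < b) fs_level th m t| <= fs_tail a.
Proof.
have [ba|ab] := leqP b a; first by rewrite big_geq // normr0 fs_tail_ge0.
apply: le_trans (ler_norm_sum _ _ _) _.
apply: le_trans (_ : \sum_(a <= m < b) fs_ratio ^+ m <= _).
  by apply: ler_sum => m _; apply: fs_level_bound.
have q1_gt0 : 0 < 1 - fs_ratio by rewrite subr_gt0 fs_ratio_lt1.
rewrite /fs_tail ler_pdivlMr // mulr_suml sumr_geometric_tail; last exact: ltnW.
by rewrite lerBlDr lerDl exprn_ge0 // ltW // fs_ratio_gt0.
Qed.

Lemma fs_partial_cvg t : cvgn (fun N => fs_partial th N t).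
Proof.
have -> : (fun N => fs_partial th N t) = series (fs_level th ^~ t).
  by apply/funext => N; rewrite /series /= big_mkord.
apply/cauchy_cvgP/cauchy_seriesP => e e_gt0.
have [N _ tail_lt] := fs_tail_lt e_gt0.
exists ([set n | (N <= n)%N], setT) => //=; first by split => //; exists N.
move=> [a b] [/= Na _].
exact: le_lt_trans (fs_level_tail_bound a b t) (tail_lt _ Na).
Qed.

Lemma fs_sum_partial_dist N t : `|fs_sum th t - fs_partial th N t| <= fs_tail N.
Proof.
apply: (cvgr_to_le (F := \oo) (f := fun M => `|fs_partial th M t - fs_partial th N t|)).
  by apply: cvg_norm; apply: cvgB; [exact: fs_partial_cvg | exact: cvg_cst].
near=> M; rewrite fs_partial_subn; first exact: fs_level_tail_bound.
by near: M; exact: (nbhs_infty_ge N).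
Unshelve. all: by end_near.
Qed.

Lemma fs_partial_cvg_uniform : {uniform, fs_partial th @ \oo --> fs_sum th}.
Proof.
move=> P /uniform_nbhs [E [entE sub]].
move: entE; rewrite -entourage_ballE => -[e /= e_gt0 he].
apply: filterS (fs_tail_lt e_gt0) => N tail_lt; apply: sub => t _; apply: he => /=.
by rewrite -ball_normE /=; exact: le_lt_trans (fs_sum_partial_dist N t) tail_lt.
Qed.

Lemma fs_sum_continuous : continuous (fs_sum th).
Proof.
apply: (uniform_limit_continuous _ _ fs_partial_cvg_uniform).
have : \forall N \near \oo, continuous (fs_partial th N).
  by apply: nearW => N; exact: fs_partial_continuous.
by [].
Qed.

End BoundedCoefficients.

Lemma eq_fs_partial th th' N :
  (forall (m : 'I_N) (k : 'I_(2 ^ m)), th m k = th' m k) ->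
  fs_partial th N = fs_partial th' N.
Proof.
move=> eq_th; apply/funext => t.
by apply: eq_bigr => m _; apply: eq_bigr => k _; rewrite eq_th.
Qed.

Lemma fs_sum_dist th th' N t :
  (forall m k, `|th m k| <= 1) -> (forall m k, `|th' m k| <= 1) ->
  (forall (m : 'I_N) (k : 'I_(2 ^ m)), th m k = th' m k) ->
  `|fs_sum th t - fs_sum th' t| <= fs_tail N + fs_tail N.
Proof.
move=> th_le1 th'_le1 /eq_fs_partial eqN.
have -> : fs_sum th t - fs_sum th' t =
    (fs_sum th t - fs_partial th N t) - (fs_sum th' t - fs_partial th' N t).
  by rewrite eqN; ring.
by apply: le_trans (ler_normB _ _) (lerD _ _); exact: fs_sum_partial_dist.
Qed.

(* For 0 <= k < 2^m the indices 2^m + k enumerate the positive integers once. *)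
Definition cantor_sign (b : cantor_space) m k : R := if b (2 ^ m + k)%N then 1 else -1.

Lemma cantor_sign_le1 b m k : `|cantor_sign b m k| <= 1.
Proof. by rewrite /cantor_sign; case: ifP; rewrite ?normrN normr1. Qed.

Lemma dyadic_index_lt m k N : (m < N)%N -> (k < 2 ^ m)%N -> (2 ^ m + k < 2 ^ N)%N.
Proof.
move=> mN km; apply: (@leq_trans (2 ^ m.+1)); last by rewrite leq_exp2l.
by rewrite expnS mul2n -addnn ltn_add2l.
Qed.

Lemma cantor_sign_onto th : (forall m k, th m k = 1 \/ th m k = -1) ->
  exists b, forall m (k : 'I_(2 ^ m)), cantor_sign b m k = th m k.
Proof.
move=> th_pm; exists (fun i => th (trunc_log 2 i) (i - 2 ^ trunc_log 2 i)%N == 1) => m k.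
rewrite /cantor_sign /=; have -> : trunc_log 2 (2 ^ m + k) = m.
  by apply: trunc_log_eq => //; rewrite leq_addr dyadic_index_lt.
by rewrite addKn; case: (th_pm m k) => ->; case: eqP => // /eqP; lra.
Qed.

Lemma cantor_sign_near b N : \forall c \near b,
  forall (m : 'I_N) (k : 'I_(2 ^ m)), cantor_sign c m k = cantor_sign b m k.
Proof.
have coord_near (i : 'I_(2 ^ N)) : \forall c \near b, c (i : nat) = b i.
  exact: (@proj_continuous nat (fun=> bool) i b [set b i] (discrete_set1 _)).
apply: filterS (filter_forall _ coord_near) => c cb m k.
by rewrite /cantor_sign (cb (Ordinal (dyadic_index_lt _ _ _ (ltn_ord m) (ltn_ord k)))).
Qed.

Definition fs_of_cantor (b : cantor_space) : {uniform` `[(0 : R), 1] -> R} :=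
  fs_sum (cantor_sign b).

Lemma fs_of_cantor_continuous : continuous fs_of_cantor.
Proof.
move=> b P /uniform_nbhs [E [entE sub]].
move: entE; rewrite -entourage_ballE => -[e /= e_gt0 he].
have [N _ tail_lt] := fs_tail_lt (divr_gt0 e_gt0 (ltr0n R 2)).
apply: filterS (cantor_sign_near b N) => c cb; apply: sub => t _; apply: he => /=.
rewrite -ball_normE /= [e]splitr.
apply: le_lt_trans (fs_sum_dist _ _ N t (cantor_sign_le1 b) (cantor_sign_le1 c) _) _.
  by move=> m k; rewrite cb.
by have := tail_lt _ (leqnn N); rewrite /= => ?; rewrite ltrD.
Qed.

Lemma FS_set_image :
  (FS_set : set {uniform` `[(0 : R), 1] -> R}) = fs_of_cantor @` setT.
Proof.
apply/seteqP; split => [x [th [th_pm [th_x _]]] | _ [b _ <-]].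
- have [b b_th] := cantor_sign_onto _ th_pm.
  have eq_partial : fs_partial th = fs_partial (cantor_sign b).
    by apply/funext => N; apply: eq_fs_partial => m k; rewrite b_th.
  rewrite eq_partial in th_x; exists b => //.
  exact/esym/fs_sum_unique.
- exists (cantor_sign b); split.
    by move=> m k; rewrite /cantor_sign; case: ifP; [left|right].
  split; first exact/fs_partial_cvg_uniform/cantor_sign_le1.
  exact/continuous_subspaceT/fs_sum_continuous/cantor_sign_le1.
Qed.

End FaberSchauder.

Theorem corollary2p5 (R : realType) :
  compact (FS_set : set {uniform` `[(0 : R), 1]%classic -> R}).
Proof.
rewrite FS_set_image; apply: continuous_compact; last exact: cantor_space_compact.
exact/continuous_subspaceT/fs_of_cantor_continuous.
Qed.
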